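(* Let $\lambda\in\mathbb{R}$, let $r,n\ge0$ be integers and let $z\in\mathbb{C}$. Then \[ \phi_{n+1,\lambda}^{(r)}(|z|^2)=\sum_{k=0}^{n}\binom{n}{k}(-\lambda)^{n-k}(n-k)!\Big(|z|^2\phi_{k,\lambda}^{(r+1)}(|z|^2)+r\,\phi_{k,\lambda}^{(r)}(|z|^2)\Big) =\sum_{k=0}^{n}\binom{n}{k}\big(r(-\lambda)_{k,\lambda}+|z|^2(1-\lambda)_{k,\lambda}\big)\phi_{n-k,\lambda}^{(r)}(|z|^2). \] In particular, for $|z|=1$, \[ \phi_{n+1,\lambda}^{(r)}=\sum_{k=0}^{n}\binom{n}{k}(-\lambda)^{n-k}(n-k)!\Big(\phi_{k,\lambda}^{(r+1)}+r\,\phi_{k,\lambda}^{(r)}\Big)=\sum_{k=0}^{n}\binom{n}{k}\big(r(-\lambda)_{k,\lambda}+(1-\lambda)_{k,\lambda}\big)\phi_{n-k,\lambda}^{(r)}. \]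
   Context: Notation: $(x)_0=1$, $(x)_m=x(x-1)\cdots(x-m+1)$; $(y)_{0,\lambda}=1$, $(y)_{n,\lambda}=y(y-\lambda)\cdots(y-(n-1)\lambda)$. The degenerate $r$-Stirling numbers of the second kind ${n+r\brace k+r}_{r,\lambda}$ are defined by $(x+r)_{n,\lambda}=\sum_{k=0}^{n}{n+r\brace k+r}_{r,\lambda}(x)_k$ ($n\ge0$), and the degenerate $r$-Bell polynomials are $\phi_{n,\lambda}^{(r)}(x)=\sum_{k=0}^{n}{n+r\brace k+r}_{r,\lambda}x^k$, with $\phi_{n,\lambda}^{(r)}=\phi_{n,\lambda}^{(r)}(1)$. *)

From mathcomp Require Import all_boot all_order all_algebra.
From mathcomp Require Import complex.
Set Implicit Arguments. Unset Strict Implicit. Unset Printing Implicit Defensive.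
Import Order.TTheory GRing.Theory Num.Theory.
Local Open Scope ring_scope.

Definition ffact {R : ringType} (x : R) (m : nat) : R :=
  \prod_(i < m) (x - i%:R).

Definition dffact {R : ringType} (y lam : R) (n : nat) : R :=
  \prod_(i < n) (y - i%:R * lam).

(* S r n k stands for the degenerate r-Stirling number {n+r brace k+r}_{r,lam},
   characterised (for 0 <= k <= n) by (x+r)_{n,lam} = sum_{k=0}^n S r n k (x)_k. *)
Definition is_degen_rStirling {R : ringType} (lam : R) (S : nat -> nat -> nat -> R) :=
  forall (r n : nat) (x : R),
    dffact (x + r%:R) lam n = \sum_(k < n.+1) S r n k * ffact x k.

Definition rBell {R : ringType} (S : nat -> nat -> nat -> R) (r n : nat) (x : R) : R :=
  \sum_(k < n.+1) S r n k * x ^+ k.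

(* The r-Bell polynomial phi^(r)_{n,lam}(t) is the image of the polynomial
   function x |-> (x + r)_{n,lam} under the linear "umbral" map sending the
   falling factorial (x)_k to t^k.  This map is well defined because the
   (x)_k are linearly independent in characteristic zero (evaluate at
   x = 0, 1, 2, ...), and since x (x - 1)_k = (x)_{k+1} it turns
   x |-> x f(x - 1) into multiplication by t.  Both identities are thus
   images of identities between polynomial functions, obtained from
   (x + r)_{n+1,lam} = (x + r) (x + r - lam)_{n,lam} and the degenerate
   Vandermonde convolution
   (a + b)_{n,lam} = sum_k C(n,k) (a)_{k,lam} (b)_{n-k,lam},
   applied to (x + r) + (-lam) for the first identity and to
   (-lam) + (x + r) and (1 - lam) + (x - 1 + r) for the second. *)

From HB Require Import structures.
From mathcomp Require Import all_boot all_order all_algebra.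
From mathcomp Require Import complex ring.
Set Implicit Arguments. Unset Strict Implicit. Unset Printing Implicit Defensive.
Import Order.TTheory GRing.Theory Num.Theory.
Local Open Scope ring_scope.

Lemma big_binS (R : pzSemiRingType) n (F : nat -> nat -> R) :
  \sum_(k < n.+2) 'C(n.+1, k)%:R * F k (n.+1 - k)%N =
  \sum_(k < n.+1) 'C(n, k)%:R * (F k (n - k)%N.+1 + F k.+1 (n - k)%N).
Proof.
rewrite big_ord_recl.
under eq_bigr => k _ do rewrite lift0 binS subSS natrD mulrDl.
under [RHS]eq_bigr => k _ do rewrite mulrDr.
rewrite !big_split /= addrA subn0; congr (_ + _).
rewrite [RHS]big_ord_recl big_ord_recr /= (bin_small (ltnSn n)) mul0r addr0.
rewrite !bin0 subn0.
by congr (_ + _); apply: eq_bigr => k _; rewrite /bump add1n subnSK.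
Qed.

Section DegenerateFallingFactorial.
Variable R : comNzRingType.
Implicit Types (x a b lam : R).

Lemma ffactS x k : ffact x k.+1 = x * ffact (x - 1) k.
Proof.
rewrite /ffact big_ord_recl subr0; congr (_ * _); apply: eq_bigr => i _.
by rewrite /= /bump leq0n add1n -addn1 natrD; ring.
Qed.

Lemma dffactS a lam k : dffact a lam k.+1 = a * dffact (a - lam) lam k.
Proof.
rewrite /dffact big_ord_recl mul0r subr0; congr (_ * _); apply: eq_bigr => i _.
by rewrite /= /bump leq0n add1n -addn1 natrD; ring.
Qed.

Lemma dffactSr a lam k : dffact a lam k.+1 = dffact a lam k * (a - k%:R * lam).
Proof. by rewrite /dffact big_ord_recr. Qed.

Lemma dffact_opp lam m : dffact (- lam) lam m = (- lam) ^+ m * m`!%:R.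
Proof.
elim: m => [|m IHm]; first by rewrite /dffact big_ord0 mul1r.
by rewrite dffactSr IHm factS natrM exprS; ring.
Qed.

Lemma dffactD a b lam n :
  dffact (a + b) lam n =
  \sum_(k < n.+1) 'C(n, k)%:R * dffact a lam k * dffact b lam (n - k)%N.
Proof.
elim: n => [|n IHn]; first by rewrite big_ord1 /dffact !big_ord0 !mulr1.
under eq_bigr do rewrite -mulrA.
rewrite (big_binS n (fun k m => dffact a lam k * dffact b lam m)).
rewrite dffactSr IHn mulr_suml; apply: eq_bigr => k _.
rewrite [dffact a lam k.+1]dffactSr [dffact b lam (n - k)%N.+1]dffactSr.
by rewrite (natrB _ (ltn_ord k)); ring.
Qed.

Lemma dffactS_expand a lam n :
  dffact a lam n.+1 =
  \sum_(k < n.+1) 'C(n, k)%:R * (- lam) ^+ (n - k) * (n - k)`!%:R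
                  * (a * dffact a lam k).
Proof.
rewrite dffactS dffactD mulr_sumr; apply: eq_bigr => k _.
by rewrite dffact_opp; ring.
Qed.

Lemma dffactS_conv a b lam n :
  dffact (a + b) lam n.+1 =
  \sum_(k < n.+1) 'C(n, k)%:R
     * (b * dffact (- lam) lam k * dffact (a + b) lam (n - k)%N
        + a * dffact (1 - lam) lam k * dffact (a - 1 + b) lam (n - k)%N).
Proof.
have conv c d : c + d = a + b - lam ->
    dffact (a + b - lam) lam n
    = \sum_(k < n.+1) 'C(n, k)%:R * dffact c lam k * dffact d lam (n - k)%N.
  by move=> <-; rewrite dffactD.
rewrite dffactS mulrDl {1}(conv (1 - lam) (a - 1 + b)); last by ring.
rewrite (conv (- lam) (a + b)); last by ring.
rewrite !mulr_sumr -big_split; apply: eq_bigr => k _ /=; ring.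
Qed.

End DegenerateFallingFactorial.

Section FallingFactorialCoordinates.
Variable R : comNzRingType.
Implicit Types (x : R) (c : {poly R}).

(* [ffact_eval x c] evaluates at [x] the polynomial whose coordinates in the
   falling-factorial basis are the coefficients of [c]; its umbral image is
   [c.[t]]. *)
Definition ffact_eval x c : R := \sum_(i < size c) c`_i * ffact x i.

Lemma ffact_eval_wide x [c N] :
  (size c <= N)%N -> ffact_eval x c = \sum_(i < N) c`_i * ffact x i.
Proof.
move=> leN.
rewrite /ffact_eval (big_ord_widen N (fun i => c`_i * ffact x i)) //.
rewrite big_mkcond; apply: eq_bigr => i _.
by case: ltnP => // /(nth_default 0) ->; rewrite mul0r.
Qed.

Lemma ffact_eval_is_linear x : linear_for *%R (ffact_eval x).
Proof.
move=> a c d; pose N := maxn (size c) (size d).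
have leNc : (size c <= N)%N := leq_maxl _ _.
have leNd : (size d <= N)%N := leq_maxr _ _.
have leN : (size (a *: c + d)%R <= N)%N.
  rewrite (leq_trans (size_polyD _ _)) // geq_max leNd andbT.
  exact: leq_trans (size_scale_leq a c) leNc.
rewrite (ffact_eval_wide x leN).
rewrite (ffact_eval_wide x leNc) (ffact_eval_wide x leNd).
rewrite mulr_sumr -big_split; apply: eq_bigr => i _ /=.
by rewrite coefD coefZ mulrDl mulrA.
Qed.

HB.instance Definition _ x :=
  GRing.isLinear.Build R {poly R} R *%R (ffact_eval x) (ffact_eval_is_linear x).

Lemma ffact_evalMX x c : ffact_eval x (c * 'X) = x * ffact_eval (x - 1) c.
Proof.
rewrite (ffact_eval_wide x (size_polyMleq c 'X)) size_polyX addn2 big_ord_recl.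
rewrite coefMX mul0r add0r mulr_sumr; apply: eq_bigr => i _.
by rewrite coefMX lift0 ffactS mulrCA.
Qed.

Lemma ffact_natr m k : ffact (m%:R : R) k = (m ^_ k)%:R.
Proof.
elim: k m => [|k IHk] m; first by rewrite /ffact big_ord0.
case: m => [|m]; rewrite ffactS ffactnS ?mul0r //.
by rewrite -natr1 addrK IHk natr1 -natrM.
Qed.

End FallingFactorialCoordinates.

Lemma ffact_eval_inj (R : numDomainType) (c d : {poly R}) :
  (forall x : R, ffact_eval x c = ffact_eval x d) -> c = d.
Proof.
move=> eq_cd; apply/eqP; rewrite -subr_eq0; apply/eqP/polyP.
have e0 (x : R) : ffact_eval x (c - d) = 0 by rewrite linearB /= eq_cd subrr.
move=> m; rewrite coef0; elim/ltn_ind: m => m IHm.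
pose N := maxn (size (c - d)) m.+1.
have ltmN : (m < N)%N by rewrite leq_max ltnSn orbT.
have := e0 m%:R; rewrite (ffact_eval_wide _ (leq_maxl _ m.+1)).
rewrite (bigD1 (Ordinal ltmN)) //= big1 ?addr0 => [|i ne_im].
  rewrite ffact_natr ffactnn => /eqP.
  by rewrite mulf_eq0 pnatr_eq0 eqn0Ngt fact_gt0 orbF => /eqP.
case: (ltngtP i m) => [lt_im|lt_mi|eq_im]; first by rewrite IHm // mul0r.
  by rewrite ffact_natr ffact_small // mulr0.
by case/eqP: ne_im; apply: val_inj.
Qed.

Section DegenerateRBell.
Variables (R : numDomainType) (lam : R) (S : nat -> nat -> nat -> R).
Hypothesis hS : is_degen_rStirling lam S.

Definition rBell_poly r n : {poly R} := \poly_(k < n.+1) S r n k.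

Lemma horner_rBell_poly r n t : (rBell_poly r n).[t] = rBell S r n t.
Proof. by rewrite horner_poly. Qed.

Lemma ffact_eval_rBell_poly r n x :
  ffact_eval x (rBell_poly r n) = dffact (x + r%:R) lam n.
Proof.
rewrite hS (ffact_eval_wide x (size_poly _ _)); apply: eq_bigr => k _.
by rewrite coef_poly ltn_ord.
Qed.

Lemma rBell_umbral r n t (P : {poly R}) :
  (forall x, ffact_eval x P = dffact (x + r%:R) lam n) -> rBell S r n t = P.[t].
Proof.
move=> evalP; rewrite -horner_rBell_poly; congr _.[t].
apply: ffact_eval_inj => x.
by rewrite evalP ffact_eval_rBell_poly.
Qed.

Lemma rBellS_upper r n t :
  rBell S r n.+1 t =
  \sum_(k < n.+1) 'C(n, k)%:R * (- lam) ^+ (n - k) * (n - k)`!%:R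
                  * (t * rBell S r.+1 k t + r%:R * rBell S r k t).
Proof.
pose c k := 'C(n, k)%:R * (- lam) ^+ (n - k) * (n - k)`!%:R.
rewrite (@rBell_umbral r n.+1 t
  (\sum_(k < n.+1) c k *: (rBell_poly r.+1 k * 'X + r%:R *: rBell_poly r k))).
  rewrite horner_sum; apply: eq_bigr => k _.
  by rewrite hornerZ hornerD hornerMX hornerZ !horner_rBell_poly [_ * t]mulrC.
move=> x; rewrite linear_sum dffactS_expand; apply: eq_bigr => k _.
rewrite linearZ linearD linearZ /= ffact_evalMX !ffact_eval_rBell_poly.
have -> : x - 1 + r.+1%:R = x + r%:R by rewrite -natr1; ring.
by rewrite -mulrDl.
Qed.

Lemma rBellS_conv r n t :
  rBell S r n.+1 t =
  \sum_(k < n.+1) 'C(n, k)%:R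
                  * (r%:R * dffact (- lam) lam k + t * dffact (1 - lam) lam k)
                  * rBell S r (n - k) t.
Proof.
pose c1 k := 'C(n, k)%:R * r%:R * dffact (- lam) lam k.
pose c2 k := 'C(n, k)%:R * dffact (1 - lam) lam k.
rewrite (@rBell_umbral r n.+1 t (\sum_(k < n.+1)
  (c1 k *: rBell_poly r (n - k)%N + c2 k *: (rBell_poly r (n - k)%N * 'X)))).
  rewrite horner_sum; apply: eq_bigr => k _.
  rewrite hornerD !hornerZ hornerMX !horner_rBell_poly /c1 /c2; ring.
move=> x; rewrite linear_sum dffactS_conv; apply: eq_bigr => k _.
rewrite linearD !linearZ /= ffact_evalMX !ffact_eval_rBell_poly.
by rewrite /c1 /c2; ring.
Qed.

End DegenerateRBell.

Theorem theorem9 (R : rcfType) (lam : R) (S : nat -> nat -> nat -> R)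
  (hS : is_degen_rStirling lam S) (r n : nat) (z : R[i]) :
  let t := Normc.normc z ^+ 2 in
  (rBell S r n.+1 t =
     \sum_(k < n.+1) 'C(n, k)%:R * (- lam) ^+ (n - k) * (n - k)`!%:R
                     * (t * rBell S r.+1 k t + r%:R * rBell S r k t)
   /\ rBell S r n.+1 t =
     \sum_(k < n.+1) 'C(n, k)%:R
                     * (r%:R * dffact (- lam) lam k + t * dffact (1 - lam) lam k)
                     * rBell S r (n - k) t)
  /\
  (Normc.normc z = 1 ->
   rBell S r n.+1 1 =
     \sum_(k < n.+1) 'C(n, k)%:R * (- lam) ^+ (n - k) * (n - k)`!%:R
                     * (rBell S r.+1 k 1 + r%:R * rBell S r k 1)
   /\ rBell S r n.+1 1 =
     \sum_(k < n.+1) 'C(n, k)%:R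
                     * (r%:R * dffact (- lam) lam k + dffact (1 - lam) lam k)
                     * rBell S r (n - k) 1).
Proof.
move=> t; split; first by split; [exact: rBellS_upper | exact: rBellS_conv].
move=> _; split; [rewrite (rBellS_upper hS) | rewrite (rBellS_conv hS)].
  by apply: eq_bigr => k _; rewrite mul1r.
by apply: eq_bigr => k _; rewrite mul1r.
Qed.
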